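(* Let $X$ be a finite non-empty set and for every $a\in X$ let $\sigma_a,\tau_a:X\to X$ be maps with each $\sigma_a$ bijective (so that the special set-theoretic Yang–Baxter algebra ${\cal A}$ of these data is defined). Suppose $(X,+,0)$ is a group (not necessarily abelian) and $\sigma_{\sigma_a(b)}(\tau_b(a))=a$ for all $a,b\in X$. Define $a\circ b:=a+\sigma_a(b)$ for $a,b\in X$. \begin{enumerate} \item Then for all $a,b\in X$, $\sigma_a(b)\circ\tau_b(a)=-a+a\circ b+a$. \item If in addition $(X,\circ)$ is a semigroup and $\sigma_a(b+c)=\sigma_a(b)+\sigma_a(c)$ for all $a,b,c\in X$, then for all $a,b,c\in X$: (a) $\sigma_a(\sigma_b(c))=\sigma_{a\circ b}(c)$; (b) $(X,\circ,0)$ is a group; (c) $a\circ(b+c)=a\circ b-a+a\circ c$; (d) $\sigma_a(0)=0$, $\tau_0(a)=a$, $\sigma_0(a)=a$ and $\tau_a(0)=0$. \end{enumerate}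
   Context: The special set-theoretic Yang–Baxter algebra ${\cal A}$ is the unital associative algebra generated by $1_{\cal A},h_a,w_a,w_a^{-1}$ ($a\in X$) with relations $h_ah_b=\delta_{a,b}h_a$, $w_a^{-1}w_a=w_aw_a^{-1}=1_{\cal A}$, $w_aw_b=w_{\sigma_a(b)}w_{\tau_b(a)}$, $w_ah_b=h_{\sigma_a(b)}w_a$, where each $\sigma_a$ is a bijection; only the bijectivity of the $\sigma_a$ enters the statement. *)

From mathcomp Require Import all_boot.

Set Implicit Arguments.
Unset Strict Implicit.
Unset Printing Implicit Defensive.

Definition is_group (T : Type) (op : T -> T -> T) (e : T) (inv : T -> T) : Prop :=
  [/\ (forall a b c, op a (op b c) = op (op a b) c),
      (forall a, op e a = a /\ op a e = a)
    & (forall a, op (inv a) a = e /\ op a (inv a) = e)].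

Definition is_group_with_unit (T : Type) (op : T -> T -> T) (e : T) : Prop :=
  [/\ (forall a b c, op a (op b c) = op (op a b) c),
      (forall a, op e a = a /\ op a e = a)
    & (forall a, exists b, op a b = e /\ op b a = e)].

Definition circ (T : Type) (add : T -> T -> T) (sigma : T -> T -> T) (a b : T) : T :=
  add a (sigma a b).

(** Part 1 is a direct computation: the relation σ_{σ_a(b)}(τ_b(a)) = a makes
    σ_a(b) ∘ τ_b(a) collapse to σ_a(b) + a.  For part 2, expanding both sides
    of the associativity of ∘ and using additivity of σ_a leaves exactly
    σ_a(σ_b(c)) = σ_{a∘b}(c).  Additivity gives σ_a(0) = 0, so 0 is a right unit
    for ∘, and then σ_0 is idempotent, hence the identity since it is
    injective; surjectivity of σ_a provides right inverses a ∘ σ_a⁻¹(-a) = 0,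
    which suffice for a monoid to be a group.  The values of τ at 0 follow
    by evaluating the relation between σ and τ at 0. *)
From mathcomp Require Import all_boot.

Set Implicit Arguments.
Unset Strict Implicit.
Unset Printing Implicit Defensive.

Section GroupFacts.

Variables (T : Type) (add : T -> T -> T) (zero : T) (opp : T -> T).
Hypothesis addG : is_group add zero opp.

Lemma addA a b c : add a (add b c) = add (add a b) c.
Proof. by case: addG. Qed.

Lemma add0x a : add zero a = a.
Proof. by case: addG => _ /(_ a) []. Qed.

Lemma addx0 a : add a zero = a.
Proof. by case: addG => _ /(_ a) []. Qed.

Lemma addNx a : add (opp a) a = zero.
Proof. by case: addG => _ _ /(_ a) []. Qed.

Lemma addxN a : add a (opp a) = zero.
Proof. by case: addG => _ _ /(_ a) []. Qed.

Lemma addKx a b : add (opp a) (add a b) = b.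
Proof. by rewrite addA addNx add0x. Qed.

Lemma add_inj a : injective (add a).
Proof. by move=> b c /(congr1 (add (opp a))); rewrite !addKx. Qed.

Lemma additive_map0 (f : T -> T) :
  (forall a b, f (add a b) = add (f a) (f b)) -> f zero = zero.
Proof.
by move=> fD; apply: (@add_inj (f zero)); rewrite -fD !addx0.
Qed.

End GroupFacts.

Lemma monoid_right_inverse_group (T : Type) (op : T -> T -> T) (e : T) :
  (forall a b c, op a (op b c) = op (op a b) c) ->
  (forall a, op e a = a /\ op a e = a) ->
  (forall a, exists b, op a b = e) ->
  is_group_with_unit op e.
Proof.
move=> opA unit rinv; split=> // a.
have [b ab_e] := rinv a; have [c bc_e] := rinv b.
have a_c : a = c.
  by rewrite -(proj2 (unit a)) -bc_e opA ab_e (proj1 (unit c)).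
by exists b; rewrite {2}a_c.
Qed.

Section SetTheoreticYangBaxter.

Variables (X : Type) (sigma tau : X -> X -> X).
Variables (add : X -> X -> X) (zero : X) (opp : X -> X).
Hypothesis sigma_bij : forall a, bijective (sigma a).
Hypothesis addG : is_group add zero opp.
Hypothesis sigma_tau : forall a b, sigma (sigma a b) (tau b a) = a.

Local Notation "a ∘ b" := (circ add sigma a b) (at level 40).

Lemma sigma_inj a : injective (sigma a).
Proof. exact: bij_inj. Qed.

Lemma circ_sigma_tau a b :
  sigma a b ∘ tau b a = add (add (opp a) (a ∘ b)) a.
Proof. by rewrite /circ sigma_tau (addKx addG). Qed.

Hypothesis circA : forall a b c, a ∘ (b ∘ c) = (a ∘ b) ∘ c.
Hypothesis sigmaD : forall a b c, sigma a (add b c) = add (sigma a b) (sigma a c).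

Lemma sigma_x0 a : sigma a zero = zero.
Proof. exact: (additive_map0 addG). Qed.

Lemma circx0 a : a ∘ zero = a.
Proof. by rewrite /circ sigma_x0 (addx0 addG). Qed.

Lemma sigma_0x a : sigma zero a = a.
Proof.
apply: (@sigma_inj zero).
by have := circA zero zero a; rewrite circx0 /circ !(add0x addG).
Qed.

Lemma circ0x a : zero ∘ a = a.
Proof. by rewrite /circ (add0x addG) sigma_0x. Qed.

Lemma sigma_circ a b c : sigma a (sigma b c) = sigma (a ∘ b) c.
Proof.
have := circA a b c; rewrite {1 2 3}/circ sigmaD -!(addA addG).
by move/(add_inj addG)/(add_inj addG).
Qed.

Lemma circ_right_inverse a : exists b, a ∘ b = zero.
Proof.
have [g _ gK] := sigma_bij a.
by exists (g (opp a)); rewrite /circ gK (addxN addG).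
Qed.

Lemma circ_group : is_group_with_unit (circ add sigma) zero.
Proof.
apply: monoid_right_inverse_group circ_right_inverse => // a.
by rewrite circ0x circx0.
Qed.

Lemma circ_addr a b c : a ∘ add b c = add (add (a ∘ b) (opp a)) (a ∘ c).
Proof. by rewrite /circ sigmaD -!(addA addG) (addKx addG). Qed.

Lemma tau_0x a : tau zero a = a.
Proof. by have := sigma_tau a zero; rewrite sigma_x0 sigma_0x. Qed.

Lemma tau_x0 a : tau a zero = zero.
Proof.
apply: (@sigma_inj a); rewrite sigma_x0.
by have := sigma_tau zero a; rewrite sigma_0x.
Qed.

End SetTheoreticYangBaxter.

Theorem theorem2p13
  (X : finType) (sigma tau : X -> X -> X)
  (add : X -> X -> X) (zero : X) (opp : X -> X) :
  (forall a : X, bijective (sigma a)) ->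
  is_group add zero opp ->
  (forall a b : X, sigma (sigma a b) (tau b a) = a) ->
  (forall a b : X,
      circ add sigma (sigma a b) (tau b a)
      = add (add (opp a) (circ add sigma a b)) a)
  /\
  ((forall a b c : X,
      circ add sigma a (circ add sigma b c) = circ add sigma (circ add sigma a b) c) ->
   (forall a b c : X, sigma a (add b c) = add (sigma a b) (sigma a c)) ->
   [/\ (forall a b c : X, sigma a (sigma b c) = sigma (circ add sigma a b) c),
       is_group_with_unit (circ add sigma) zero,
       (forall a b c : X,
          circ add sigma a (add b c)
          = add (add (circ add sigma a b) (opp a)) (circ add sigma a c))
     & (forall a : X,
          [/\ sigma a zero = zero, tau zero a = a,
              sigma zero a = a & tau a zero = zero])]).
Proof.
move=> sigma_bij addG sigma_tau.
split; first exact: circ_sigma_tau addG sigma_tau.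
move=> circA sigmaD; split.
- exact: sigma_circ addG circA sigmaD.
- exact: circ_group sigma_bij addG circA sigmaD.
- exact: circ_addr addG sigmaD.
- move=> a; split.
  + exact: sigma_x0 addG sigmaD a.
  + exact: tau_0x sigma_bij addG sigma_tau circA sigmaD a.
  + exact: sigma_0x sigma_bij addG circA sigmaD a.
  + exact: tau_x0 sigma_bij addG sigma_tau circA sigmaD a.
Qed.
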